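(* Let $\mathcal{L}$ be a language with semantic structure $\mathcal{S}=(\Sigma,I)$. For every $A\in\mathrm{Abs}(\wp(\Sigma))$, $A$ is strongly preserving for $\mathcal{L}$ if and only if $A\sqsubseteq\mathrm{AD}_{\mathcal{L}}$.
   Context: A language $\mathcal{L}$ has formulae $\varphi::=p\mid f(\varphi_1,\dots,\varphi_n)$, $p$ in a set $AP$ of atoms, $f$ in a finite set $Op$ of operators of arity $\ge1$. A semantic structure $\mathcal{S}=(\Sigma,I)$ gives $\mathbf{p}=I(p)\subseteq\Sigma$ and $\mathbf{f}=I(f):\wp(\Sigma)^{n}\to\wp(\Sigma)$, with $[\![p]\!]_{\mathcal{S}}=\mathbf{p}$, $[\![f(\varphi_1,..,\varphi_n)]\!]_{\mathcal{S}}=\mathbf{f}([\![\varphi_1]\!]_{\mathcal{S}},..)$. An abstract domain $A$ of $\wp(\Sigma)_\subseteq$ is a complete lattice with a Galois insertion $(\alpha,\wp(\Sigma),A,\gamma)$ (monotone maps, $\alpha(S)\le_A a\iff S\subseteq\gamma(a)$, $\alpha\circ\gamma=\mathrm{id}$), with associated closure $\mu_A=\gamma\circ\alpha$; $\mathrm{Abs}(\wp(\Sigma))$ identifies domains with equal closures and is ordered by $A_1\sqsubseteq A_2$ iff $\mu_{A_1}(S)\subseteq\mu_{A_2}(S)$ for all $S$. Any closure $\mu$ on $\wp(\Sigma)$ (monotone, idempotent, extensive) is an abstract domain (its image, with $\alpha=\mu$ and $\gamma$ the inclusion). $A$ induces the abstract semantics $[\![p]\!]^A_{\mathcal{S}}=\alpha(\mathbf{p})$,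 $[\![f(\varphi_1,..,\varphi_n)]\!]^A_{\mathcal{S}}=\alpha(\mathbf{f}(\gamma([\![\varphi_1]\!]^A_{\mathcal{S}}),..,\gamma([\![\varphi_n]\!]^A_{\mathcal{S}})))$. $A$ is strongly preserving for $\mathcal{L}$ if for all $\varphi\in\mathcal{L}$, $S\subseteq\Sigma$: $\alpha(S)\le_A[\![\varphi]\!]^A_{\mathcal{S}}\iff S\subseteq[\![\varphi]\!]_{\mathcal{S}}$. $\mathrm{AD}_{\mathcal{L}}$ is the abstract domain given by the closure whose image is the set of all intersections of subfamilies of $\{[\![\varphi]\!]_{\mathcal{S}}\mid\varphi\in\mathcal{L}\}$ (the empty intersection being $\Sigma$), i.e. $S\mapsto\bigcap\{[\![\varphi]\!]_{\mathcal{S}}\mid\varphi\in\mathcal{L},S\subseteq[\![\varphi]\!]_{\mathcal{S}}\}$. *)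

From mathcomp Require Import all_boot.
From mathcomp Require Import boolp classical_sets.
Set Implicit Arguments.
Unset Strict Implicit.
Unset Printing Implicit Defensive.
Local Open Scope classical_set_scope.

Inductive formula (AP : Type) (Op : finType) (ar : Op -> nat) : Type :=
| Atom : AP -> formula AP ar
| App : forall f : Op, ('I_(ar f) -> formula AP ar) -> formula AP ar.
Arguments Atom {AP Op ar}.
Arguments App {AP Op ar}.

(* Concrete semantics w.r.t. a semantic structure S = (Sigma, I),
   I given by Ip (atoms) and If (operators). *)
Fixpoint sem (AP : Type) (Op : finType) (ar : Op -> nat) (Sigma : Type)
  (Ip : AP -> set Sigma)
  (If : forall f : Op, ('I_(ar f) -> set Sigma) -> set Sigma)
  (phi : formula AP ar) : set Sigma :=
  match phi with
  | Atom p => Ip p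
  | App f args => If f (fun i => sem Ip If (args i))
  end.

Definition complete_lattice (A : Type) (le : A -> A -> Prop) : Prop :=
  [/\ (forall a, le a a),
      (forall a b c, le a b -> le b c -> le a c),
      (forall a b, le a b -> le b a -> a = b) &
      (forall X : set A, exists l : A,
          (forall x, X x -> le x l) /\
          (forall u, (forall x, X x -> le x u) -> le l u))].

Definition abstract_domain (Sigma A : Type) (le : A -> A -> Prop)
  (alpha : set Sigma -> A) (gamma : A -> set Sigma) : Prop :=
  [/\ complete_lattice le,
      (forall S T : set Sigma, S `<=` T -> le (alpha S) (alpha T)),
      (forall a b : A, le a b -> gamma a `<=` gamma b),
      (forall (S : set Sigma) (a : A), le (alpha S) a <-> S `<=` gamma a) &
      (forall a : A, alpha (gamma a) = a)].

Fixpoint asem (AP : Type) (Op : finType) (ar : Op -> nat) (Sigma A : Type)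
  (Ip : AP -> set Sigma)
  (If : forall f : Op, ('I_(ar f) -> set Sigma) -> set Sigma)
  (alpha : set Sigma -> A) (gamma : A -> set Sigma)
  (phi : formula AP ar) : A :=
  match phi with
  | Atom p => alpha (Ip p)
  | App f args => alpha (If f (fun i => gamma (asem Ip If alpha gamma (args i))))
  end.

Definition strongly_preserving (AP : Type) (Op : finType) (ar : Op -> nat)
  (Sigma A : Type) (Ip : AP -> set Sigma)
  (If : forall f : Op, ('I_(ar f) -> set Sigma) -> set Sigma)
  (le : A -> A -> Prop) (alpha : set Sigma -> A) (gamma : A -> set Sigma) : Prop :=
  forall (phi : formula AP ar) (S : set Sigma),
    le (alpha S) (asem Ip If alpha gamma phi) <-> S `<=` sem Ip If phi.

(* The closure of AD_L: S |-> intersection of all [[phi]] containing S. *)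
Definition AD_closure (AP : Type) (Op : finType) (ar : Op -> nat) (Sigma : Type)
  (Ip : AP -> set Sigma)
  (If : forall f : Op, ('I_(ar f) -> set Sigma) -> set Sigma)
  (S : set Sigma) : set Sigma :=
  fun x => forall phi : formula AP ar, S `<=` sem Ip If phi -> sem Ip If phi x.

(* Ordering of Abs(P(Sigma)) via closures: A1 below A2 iff mu1 S <= mu2 S. *)
Definition closure_le (Sigma : Type) (mu1 mu2 : set Sigma -> set Sigma) : Prop :=
  forall S : set Sigma, mu1 S `<=` mu2 S.

From mathcomp Require Import all_boot.
From mathcomp Require Import boolp classical_sets.

(* Both conditions say that every [[phi]] is closed for mu = gamma o alpha.
   For strong preservation this is forced by testing it on S = [[phi]] and
   on S = gamma [[phi]]^A; conversely, once every [[phi]] is closed an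
   induction shows [[phi]]^A = alpha [[phi]], and the Galois connection gives
   the equivalence.  For the closure order, AD_L(S) is the least
   intersection of [[phi]]'s above S, so mu <= AD_L exactly when mu fixes
   each [[phi]]. *)

Set Implicit Arguments.
Unset Strict Implicit.
Unset Printing Implicit Defensive.
Local Open Scope classical_set_scope.

Section Language.
Variables (AP : Type) (Op : finType) (ar : Op -> nat) (Sigma : Type).
Variables (Ip : AP -> set Sigma).
Variables (If : forall f : Op, ('I_(ar f) -> set Sigma) -> set Sigma).

Local Notation sem := (sem Ip If).

Definition sem_closed (mu : set Sigma -> set Sigma) : Prop :=
  forall phi : formula AP ar, mu (sem phi) `<=` sem phi.

Lemma AD_closure_sem (phi : formula AP ar) : AD_closure Ip If (sem phi) `<=` sem phi.
Proof. by move=> x; apply. Qed.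

Lemma closure_le_AD_closureP (mu : set Sigma -> set Sigma) :
    (forall S T, S `<=` T -> mu S `<=` mu T) ->
  closure_le mu (AD_closure Ip If) <-> sem_closed mu.
Proof.
move=> mu_mono; split=> [mu_le phi | mu_sem S x muSx phi SsubPhi].
- by move=> x /mu_le; apply: AD_closure_sem.
- exact/mu_sem/(mu_mono _ _ SsubPhi).
Qed.

Section AbstractDomain.
Variables (A : Type) (le : A -> A -> Prop).
Variables (alpha : set Sigma -> A) (gamma : A -> set Sigma).
Hypothesis HA : abstract_domain le alpha gamma.

Local Notation asem := (asem Ip If alpha gamma).
Local Notation mu := (fun S => gamma (alpha S)).

Lemma le_refl_abs (a : A) : le a a.
Proof. by case: HA => [[]]. Qed.

Lemma gamma_alpha_mono (S T : set Sigma) : S `<=` T -> gamma (alpha S) `<=` gamma (alpha T).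
Proof. by case: HA => _ alpha_mono gamma_mono _ _ /alpha_mono/gamma_mono. Qed.

Lemma sub_gamma_alpha (S : set Sigma) : S `<=` gamma (alpha S).
Proof. by case: HA => _ _ _ galois _; apply/galois/le_refl_abs. Qed.

Lemma asem_eq_alpha_sem (phi : formula AP ar) :
  sem_closed mu -> asem phi = alpha (sem phi).
Proof.
move=> closed; elim: phi => [p | f args IH] //=.
congr (alpha (@If f _)); apply: funext => i.
by rewrite IH; apply/seteqP; split; [apply: closed | apply: sub_gamma_alpha].
Qed.

Lemma strongly_preserving_closed :
  strongly_preserving Ip If le alpha gamma -> sem_closed mu.
Proof.
case: HA => _ _ gamma_mono _ alpha_gamma sp phi.
have le_sem : le (alpha (sem phi)) (asem phi) by apply/sp.
have gamma_asem : gamma (asem phi) `<=` sem phi.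
  by apply/sp; rewrite alpha_gamma; apply: le_refl_abs.
exact: subset_trans (gamma_mono _ _ le_sem) gamma_asem.
Qed.

Lemma closed_strongly_preserving :
  sem_closed mu -> strongly_preserving Ip If le alpha gamma.
Proof.
case: HA => _ _ _ galois _ closed phi S; rewrite asem_eq_alpha_sem // galois.
by split=> S_sub x /S_sub; [apply: closed | apply: sub_gamma_alpha].
Qed.

End AbstractDomain.
End Language.

Theorem theorem5p4 (AP : Type) (Op : finType) (ar : Op -> nat)
  (ar_pos : forall f : Op, 0 < ar f)
  (Sigma : Type) (Ip : AP -> set Sigma)
  (If : forall f : Op, ('I_(ar f) -> set Sigma) -> set Sigma)
  (A : Type) (le : A -> A -> Prop)
  (alpha : set Sigma -> A) (gamma : A -> set Sigma)
  (HA : abstract_domain le alpha gamma) :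
  strongly_preserving Ip If le alpha gamma <->
  closure_le (fun S => gamma (alpha S)) (AD_closure Ip If).
Proof.
have [to_closed of_closed] := closure_le_AD_closureP Ip If (gamma_alpha_mono HA).
split=> [/(strongly_preserving_closed HA)/of_closed // | /to_closed].
exact: closed_strongly_preserving.
Qed.
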